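(* For the coprime hider strategy $y$ and every $v\in V\setminus\{1\}$, $y(C(T_v))\le h/w$.
   Context: $G$ is the path graph with $V=\{0,\dots,n-1\}$ and edges $\{v,v+1\}$; $k\ge2$, $n>2^k$, $c=2^k-2$ with $\gcd(c,n-1)=1$; $h,w$ are the positive integers with $h(n-1)-wc=1$ and $w\in\{1,\dots,n-2\}$ minimal. A search strategy for a tree $H$ is a rooted binary tree defined recursively: a single node is a search strategy for any $H$; otherwise the root is labeled with an edge $uv$ of $H$ and its two child subtrees are search strategies for the components $H_u,H_v$ of $H-uv$ containing $u,v$. Nodes get vertex sets: the root gets $V(H)$, the children of a root labeled $uv$ get $V(H_u),V(H_v)$, recursively. $C(T)$ is the set of $v$ with $V(\lambda)=\{v\}$ for a leaf $\lambda$; $\mathcal{T}_k$ is the set of search strategies of height at most $k$. $[u\oplus\ell]=\{w\bmod n: u\le w\le u+\ell-1\}$, $[a,b]=\{a,\dots,b\}$. For $v\in V\setminus\{1\}$, $T_v\in\mathcal{T}_k$ is any strategy with $C(T_v)=[v\oplus(c+1)]$ if this interval meets $\{0,n-1\}$ and $C(T_v)=[v\oplus c]$ otherwise. $y(S)=\sum_{i\in S}y_i$. Coprime hider strategy: $g(v)=v\frac{h}{wc}$, $r=\lfloor c/h\rfloor$; $y_0=y_{n-1}=0$; starting at $v=1$, repeatedly choose the largest $r^*\in\{r,r+1\}$ with $g(v+r^*-1)\le y([1,v-1])+\frac1w$, set $y_i=\frac{1}{r^*w}$ for $i\in\{v,\dots,v+r^*-1\}$, replace $v$ by $v+r^*$;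 stop when $v>n-2$. *)

From mathcomp Require Import all_boot all_order all_algebra.
Set Implicit Arguments. Unset Strict Implicit. Unset Printing Implicit Defensive.
Import Order.TTheory GRing.Theory Num.Theory.
Local Open Scope ring_scope.

(* Path graph on V = {0,...,n-1}; everything is over nat indices, weights in rat. *)

Definition cc (k : nat) : nat := (2 ^ k - 2)%N.

Definition in_cint (n u l i : nat) : bool :=
  has (fun j => (j %% n)%N == i) (iota u l).

Definition ysum (n : nat) (y : nat -> rat) (S : nat -> bool) : rat :=
  \sum_(i < n | S i) y i.

Definition CTv (n k v : nat) : nat -> bool :=
  if in_cint n v (cc k).+1 0 || in_cint n v (cc k).+1 n.-1
  then in_cint n v (cc k).+1
  else in_cint n v (cc k).

Definition gfun (k h w : nat) (v : nat) : rat :=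
  (v%:R * h%:R) / (w%:R * (cc k)%:R).

Definition rr (k h : nat) : nat := (cc k %/ h)%N.

(* One run of the greedy block-assignment loop, with fuel.
   State: current vertex v and the partial assignment y (0 where unassigned).
   r* = r+1 if g(v + (r+1) - 1) <= y([1,v-1]) + 1/w, otherwise r. *)
Fixpoint hider_aux (n k h w : nat) (fuel v : nat) (y : nat -> rat) : nat -> rat :=
  match fuel with
  | O => y
  | S f =>
    if (n - 2 < v)%N then y else
    let s := \sum_(1 <= i < v) y i in
    let r := rr k h in
    let rs := if gfun k h w (v + r) <= s + 1 / w%:R then r.+1 else r in
    let y' := fun i => if (v <= i < v + rs)%N then 1 / (rs%:R * w%:R) else y i in
    hider_aux n k h w f (v + rs) y'
  end.

Definition hider (n k h w : nat) (i : nat) : rat :=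
  if (i == 0)%N || (i == n.-1) then 0
  else hider_aux n k h w n 1 (fun _ => 0) i.

From mathcomp Require Import all_boot all_order all_algebra.
From mathcomp Require Import zify ring lra.
Import Order.TTheory GRing.Theory Num.Theory.
Set Implicit Arguments. Unset Strict Implicit. Unset Printing Implicit Defensive.

(* The coprime hider cuts the inner vertices 1..n-2 into the w blocks
   (cut m, cut m.+1] with cut m = floor(m c / h), and spreads weight 1/w uniformly
   over each block: the greedy choice between r and r+1 is exactly the block length.
   So the first x inner vertices carry mass x / w, where mass is piecewise linear
   with mass (cut m) = m.  As cut (m + h) = cut m + c, mass (x + c) = mass x + h: any
   c consecutive inner vertices carry exactly h/w.  The remaining windows wrap around
   the end of the path, and are bounded by the superadditivity
   M + mass y <= mass (cut M + 1 + y) for M = w - h, using cut w = n - 2, which is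
   h(n-1) = wc + 1. *)

Definition cut (c h m : nat) : nat := m * c %/ h.
Definition blen (c h m : nat) : nat := cut c h m.+1 - cut c h m.
Definition block_of (c h x : nat) : nat := (x.+1 * h).-1 %/ c.

Section Cuts.
Variables c h : nat.
Hypothesis h_gt0 : 0 < h.

Lemma cut_le m x : (cut c h m <= x) = (m * c < x.+1 * h).
Proof. by rewrite /cut -ltnS ltn_divLR. Qed.

Lemma cut_gt m x : (x < cut c h m) = (x.+1 * h <= m * c).
Proof. by rewrite /cut leq_divRL. Qed.

Lemma cut_bezout w m : h * m = w * c + 1 -> cut c h w = m.-1.
Proof.
move=> bezout; rewrite /cut.
have -> : w * c = m.-1 * h + h.-1 by move: bezout; case: m; nia.
by rewrite divnMDl // divn_small ?addn0 // ltn_predL.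
Qed.

Lemma cut0 : cut c h 0 = 0.
Proof. by rewrite /cut mul0n div0n. Qed.

Lemma cutD a b : cut c h a + cut c h b <= cut c h (a + b) <= cut c h a + cut c h b + 1.
Proof. by rewrite /cut mulnDl divnD //; case: (h <= _); rewrite ?addn0 ?addn1 leqnn ?leqnSn. Qed.

Lemma cut_addh m : cut c h (m + h) = cut c h m + c.
Proof. by rewrite /cut mulnDl [h * c]mulnC divnDMl. Qed.

Lemma leq_cut a b : a <= b -> cut c h a <= cut c h b.
Proof. by move=> ab; rewrite leq_div2r // leq_mul2r ab orbT. Qed.

Lemma blen_addh m : blen c h (m + h) = blen c h m.
Proof. by rewrite /blen -addSn !cut_addh subnDr. Qed.

Hypothesis h_le_c : h <= c.

Lemma blen_gt0 m : 0 < blen c h m.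
Proof.
have := cutD m 1; have : 1 <= cut c h 1 by rewrite /cut mul1n leq_divRL ?mul1n.
rewrite /blen addn1; lia.
Qed.

Lemma block_ofP x m : cut c h m <= x < cut c h m.+1 -> block_of c h x = m.
Proof.
rewrite cut_le cut_gt /block_of => /andP[lo hi].
have x1h_gt0 : 0 < x.+1 * h by rewrite muln_gt0.
apply/eqP; rewrite eqn_leq -ltnS ltn_divLR ?leq_divRL; try lia.
Qed.

Lemma cut_block_of x : cut c h (block_of c h x) <= x < cut c h (block_of c h x).+1.
Proof.
have c_gt0 : 0 < c by apply: leq_trans h_le_c.
have x1h_gt0 : 0 < x.+1 * h by rewrite muln_gt0.
rewrite cut_le cut_gt /block_of; apply/andP; split.
  by apply: leq_ltn_trans (leq_divM _ _) _; rewrite -ltnS prednK // ltnS.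
by have := ltn_ceil (x.+1 * h).-1 c_gt0; rewrite prednK.
Qed.

End Cuts.

Local Open Scope ring_scope.

Lemma ler_pdiv_nat (R : numFieldType) (u s v t : nat) : (0 < s)%N -> (0 < t)%N ->
  (u * t <= v * s)%N -> u%:R / s%:R <= v%:R / t%:R :> R.
Proof.
move=> s_gt0 t_gt0 le_uv.
by rewrite ler_pdivrMr ?ltr0n // mulrAC ler_pdivlMr ?ltr0n // -!natrM ler_nat.
Qed.

Definition dens (c h x : nat) : rat := (blen c h (block_of c h x))%:R^-1.
Definition mass (c h x : nat) : rat := \sum_(0 <= i < x) dens c h i.

Section Mass.
Variables c h : nat.
Hypotheses (h_gt0 : (0 < h)%N) (h_le_c : (h <= c)%N).

Lemma dens_ge0 x : 0 <= dens c h x.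
Proof. by rewrite invr_ge0 ler0n. Qed.

Lemma mass0 : mass c h 0 = 0.
Proof. by rewrite /mass big_geq. Qed.

Lemma massS x : mass c h x.+1 = mass c h x + dens c h x.
Proof. by rewrite /mass big_nat_recr. Qed.

Lemma ler_mass x y : (x <= y)%N -> mass c h x <= mass c h y.
Proof.
move=> xy; rewrite /mass (big_cat_nat (leq0n x) xy) /= lerDl.
by apply: sumr_ge0 => i _; apply: dens_ge0.
Qed.

Lemma mass_in_block m t : (t <= blen c h m)%N ->
  mass c h (cut c h m + t) = mass c h (cut c h m) + t%:R / (blen c h m)%:R.
Proof.
elim: t => [|t IHt] t_le; first by rewrite addn0 mul0r addr0.
rewrite addnS massS IHt 1?ltnW // /dens (block_ofP h_gt0 h_le_c (m := m)); last first.
  by rewrite leq_addr /=; move: t_le; rewrite /blen; lia.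
by rewrite -addrA -natr1 mulrDl mul1r.
Qed.

Lemma mass_cut m : mass c h (cut c h m) = m%:R.
Proof.
elim: m => [|m IHm]; first by rewrite cut0 mass0.
have blen_neq0 : (blen c h m)%:R != 0 :> rat by rewrite pnatr_eq0 -lt0n blen_gt0.
rewrite -(subnKC (leq_cut c h (leqnSn m))) -/(blen c h m) mass_in_block //.
by rewrite IHm divff // -natr1.
Qed.

Lemma mass_seg m x : (cut c h m <= x < cut c h m.+1)%N ->
  mass c h x = m%:R + (x - cut c h m)%:R / (blen c h m)%:R.
Proof.
case/andP=> lo hi; rewrite -{1}(subnKC lo) mass_in_block ?mass_cut //.
by rewrite /blen; lia.
Qed.

Lemma mass_addc x : mass c h (x + c) = mass c h x + h%:R.
Proof.
have /andP[lo hi] := cut_block_of h_gt0 h_le_c x.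
set m := block_of c h x in lo hi.
rewrite (@mass_seg m x) ?lo // (@mass_seg (m + h)); last first.
  by rewrite -[(m + h).+1]addSn !(cut_addh c h_gt0) leq_add2r lo ltn_add2r.
by rewrite blen_addh // (cut_addh c h_gt0) subnDr natrD; ring.
Qed.

(* With y = cut m + t, the point cut M + 1 + y lies at least t + d into block M + m,
   where d <= 1 is the carry in cutD, and that block is at most d longer than block m. *)
Lemma mass_super M y : M%:R + mass c h y <= mass c h (cut c h M + 1 + y).
Proof.
have /andP[lo hi] := cut_block_of h_gt0 h_le_c y.
set m := block_of c h y in lo hi.
have := cutD c h_gt0 M m; have := cutD c h_gt0 M m.+1; rewrite addnS.
set d := (cut c h M + cut c h m + 1 - cut c h (M + m))%N.
have := blen_gt0 h_gt0 h_le_c m; have := blen_gt0 h_gt0 h_le_c (M + m); rewrite /blen.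
set t := (y - cut c h m)%N; set S := blen c h (M + m) => S_gt0 s_gt0 cutD1 cutD0.
have z_ge : (cut c h (M + m) + minn (t + d) S <= cut c h M + 1 + y)%N by rewrite /S /blen; lia.
apply: le_trans (ler_mass z_ge).
rewrite mass_in_block ?geq_minr // mass_cut (@mass_seg m y) ?lo //.
rewrite natrD -addrA lerD2l lerD2l ler_pdiv_nat //.
rewrite /S /t /d /blen; nia.
Qed.

Lemma mass_wrap w y : (h <= w)%N ->
  mass c h (cut c h w) - (mass c h (cut c h w - c + 1 + y) - mass c h y) <= h%:R.
Proof.
move=> h_le_w; have := mass_super (w - h) y.
have <- : cut c h (w - h) = (cut c h w - c)%N by rewrite -{2}(subnK h_le_w) cut_addh ?addnK.
by rewrite !mass_cut natrB //; lra.
Qed.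

End Mass.

Definition partial_hider (c h w j i : nat) : rat :=
  if (0 < i <= cut c h j)%N then dens c h i.-1 / w%:R else 0.

Lemma sum_partial_hider c h w j x :
  \sum_(0 <= i < x) partial_hider c h w j i = mass c h (minn x.-1 (cut c h j)) / w%:R.
Proof.
elim: x => [|x IHx]; first by rewrite big_geq // min0n mass0 mul0r.
rewrite big_nat_recr //= IHx /partial_hider.
case: x {IHx} => [|x] /=; first by rewrite min0n mass0 !mul0r addr0.
have [x_lt | x_ge] := ltnP x (cut c h j).
  by rewrite (minn_idPl x_lt) massS mulrDl.
by rewrite addr0 (minn_idPr (leqW x_ge)).
Qed.

Lemma hider_aux_ext n k h w f v (y1 y2 : nat -> rat) : y1 =1 y2 ->
  hider_aux n k h w f v y1 =1 hider_aux n k h w f v y2.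
Proof.
elim: f v y1 y2 => [|f IHf] v y1 y2 y12 //=.
rewrite (eq_bigr _ (fun i _ => y12 i)); case: ifP => // _.
by apply: IHf => i; rewrite y12.
Qed.

Section Greedy.
Variables n k h w : nat.
Let c := cc k.
Hypotheses (h_gt0 : (0 < h)%N) (h_le_c : (h <= c)%N) (w_gt0 : (0 < w)%N).

Lemma gfun_le x j : (gfun k h w x <= j%:R / w%:R + 1 / w%:R) = (x * h <= j.+1 * c)%N.
Proof.
have c_gt0 : (0 < c)%N by apply: leq_trans h_le_c.
rewrite /gfun -mulrDl natr1 ler_pdivrMr ?mulr_gt0 ?ltr0n // mulrA divfK.
  by rewrite -!natrM ler_nat.
by rewrite pnatr_eq0 -lt0n.
Qed.

Lemma greedy_blen j :
  (if gfun k h w ((cut c h j).+1 + rr k h)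
        <= \sum_(1 <= i < (cut c h j).+1) partial_hider c h w j i + 1 / w%:R
   then (rr k h).+1 else rr k h) = blen c h j.
Proof.
have := sum_partial_hider c h w j (cut c h j).+1.
rewrite big_ltn // {1}/partial_hider /= add0r minnn mass_cut // => ->.
have -> : rr k h = cut c h 1 by rewrite /cut mul1n.
have := cutD c h_gt0 j 1; rewrite gfun_le addSn -(cut_gt c h_gt0) addn1 /blen.
by case: ltnP; lia.
Qed.

Lemma partial_hider_next j i :
  (if (cut c h j < i <= cut c h j.+1)%N
   then 1 / ((blen c h j)%:R * w%:R) else partial_hider c h w j i)
  = partial_hider c h w j.+1 i.
Proof.
have := leq_cut c h (leqnSn j); rewrite /partial_hider /blen => cut_le.
case: ifP => [/andP[lo hi] | out].
  rewrite ifT; last by apply/andP; split; lia.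
  by rewrite /dens (block_ofP h_gt0 h_le_c (m := j)) ?div1r ?invfM //; lia.
by congr (if _ then _ else _); apply/idP/idP; lia.
Qed.

Hypothesis cut_w : cut c h w = (n - 2)%N.

Lemma hider_aux_step f j : (j < w)%N ->
  hider_aux n k h w f.+1 (cut c h j).+1 (partial_hider c h w j)
  =1 hider_aux n k h w f (cut c h j.+1).+1 (partial_hider c h w j.+1).
Proof.
move=> j_lt_w /=; have := leq_cut c h j_lt_w; rewrite cut_w => cut_le.
rewrite ifF; last by have := blen_gt0 h_gt0 h_le_c j; rewrite /blen; lia.
rewrite greedy_blen; have -> : ((cut c h j).+1 + blen c h j = (cut c h j.+1).+1)%N.
  by have := leq_cut c h (leqnSn j); rewrite /blen; lia.
by apply: hider_aux_ext => i; rewrite ltnS partial_hider_next.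
Qed.

Lemma hider_aux_run f j : (j <= w)%N -> (w - j < f)%N ->
  hider_aux n k h w f (cut c h j).+1 (partial_hider c h w j) =1 partial_hider c h w w.
Proof.
elim: f j => [|f IHf] j j_le f_gt //; have [j_lt | j_ge] := ltnP j w.
  by move=> i; rewrite hider_aux_step // IHf //; lia.
have -> : j = w by lia.
by move=> i /=; rewrite cut_w ltnSn.
Qed.

Lemma hider_eq : (w < n)%N -> hider n k h w =1 partial_hider c h w w.
Proof.
move=> w_lt_n i; have := @hider_aux_run n 0; rewrite cut0 => run.
have y0 : (fun=> 0) =1 partial_hider c h w 0 by move=> [|j]; rewrite /partial_hider cut0.
rewrite /hider (hider_aux_ext _ _ _ _ _ _ y0 i) run ?subn0 //.
case: ifP => // /orP[] /eqP ->; rewrite /partial_hider cut_w //.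
by rewrite ifF //; lia.
Qed.

End Greedy.

Lemma in_cintE n u l i : (u < n)%N -> (l <= n)%N -> (i < n)%N ->
  in_cint n u l i = ((u <= i < u + l) || (i < u + l - n))%N.
Proof.
move=> u_lt l_le i_lt; rewrite /in_cint; apply/hasP/idP => [[j] | ].
  rewrite mem_iota => /andP[j_ge j_lt] /eqP <-.
  have [j_lt_n | j_ge_n] := ltnP j n; first by rewrite modn_small // j_ge j_lt.
  by rewrite -(subnK j_ge_n) modnDr modn_small; lia.
case/orP => [i_in | i_wrap]; [exists i | exists (i + n)];
  by rewrite ?mem_iota ?modnDr ?modn_small //; lia.
Qed.

Lemma sum_nat_window (R : zmodType) (f : nat -> R) N a b : (a <= b <= N)%N ->
  \sum_(0 <= i < N | (a <= i < b)%N) f i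
  = \sum_(0 <= i < b) f i - \sum_(0 <= i < a) f i.
Proof.
case/andP=> ab bN; rewrite [in RHS](big_cat_nat (leq0n a) ab) /= addrC addrK.
by rewrite (big_nat_widenl _ _ _ _ _ (leq0n a)) (big_nat_widen _ _ _ _ _ bN).
Qed.

Lemma sum_cint (R : zmodType) (f : nat -> R) n u l : (u < n)%N -> (l <= n)%N ->
  \sum_(i < n | in_cint n u l i) f i =
  if (u + l <= n)%N then \sum_(0 <= i < u + l) f i - \sum_(0 <= i < u) f i
  else \sum_(0 <= i < n) f i - (\sum_(0 <= i < u) f i - \sum_(0 <= i < u + l - n) f i).
Proof.
move=> u_lt l_le; rewrite -(big_mkord (in_cint n u l)).
case: ifP => ul.
  rewrite -(@sum_nat_window _ _ n) ?ul ?leq_addr //.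
  by apply: congr_big_nat => // i /= i_lt; rewrite in_cintE //; apply/idP/idP; lia.
rewrite [\sum_(0 <= i < n) _](bigID (fun i => u + l - n <= i < u)%N) /= sum_nat_window; last by lia.
rewrite addrC addrK.
by apply: congr_big_nat => // i /= i_lt; rewrite in_cintE //; apply/idP/idP; lia.
Qed.

Theorem lemma3p8 (k n h w : nat) :
  (2 <= k)%N -> (2 ^ k < n)%N -> coprime (cc k) (n - 1) ->
  (0 < h)%N -> (0 < w)%N -> (h * (n - 1) = w * cc k + 1)%N ->
  (w <= n - 2)%N ->
  (forall h' w' : nat, (0 < h')%N -> (0 < w')%N -> (w' < w)%N ->
      (h' * (n - 1) <> w' * cc k + 1)%N) ->
  forall v : nat, (v < n)%N -> v <> 1%N ->
    ysum n (hider n k h w) (CTv n k v) <= h%:R / w%:R.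
Proof.
move=> k_ge2 n_gt _ h_gt0 w_gt0 bezout w_le _ v v_lt v_neq1.
have pow_k : (4 <= 2 ^ k)%N by rewrite -[4%N]/(2 ^ 2)%N leq_exp2l.
have c_lt_n : (cc k + 2 < n)%N by rewrite /cc; lia.
have c_ge2 : (2 <= cc k)%N by rewrite /cc; lia.
set c := cc k in bezout c_lt_n c_ge2 *.
have h_lt_c : (h < c)%N by nia.
have h_le_w : (h <= w)%N by nia.
have cut_w : cut c h w = (n - 2)%N by rewrite (cut_bezout h_gt0 bezout); lia.
have h_le_c := ltnW h_lt_c.
rewrite /ysum (eq_bigr _ (fun (i : 'I_n) _ => hider_eq h_gt0 h_le_c w_gt0 cut_w _ i)); last by lia.
have window x y : y = (x + c)%N -> mass c h y / w%:R - mass c h x / w%:R <= h%:R / w%:R.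
  by move=> ->; rewrite -mulrBl mass_addc // addrC addKr.
rewrite /CTv -/c !in_cintE; try lia.
(* Unless it wraps, the window consists of c consecutive inner vertices plus
   possibly an endpoint of the path, which has weight 0. *)
case: ifP => touch; rewrite sum_cint; try lia; case: ifP => fits;
  rewrite !sum_partial_hider cut_w.
- by apply: window; lia.
- rewrite -!mulrBl ler_pM2r ?invr_gt0 ?ltr0n //.
  have -> : minn n.-1 (n - 2) = cut c h w by rewrite cut_w; lia.
  have -> : minn v.-1 (n - 2) = (cut c h w - c + 1 + (v + c.+1 - n).-1)%N.
    by rewrite cut_w; lia.
  by rewrite (minn_idPl _) ?mass_wrap //; lia.
- by apply: window; lia.
- lia.
Qed.
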